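(* For any nonzero positively oriented m-triangle $\delta$, the polar distance $r$ of its shape from the north pole (the spherical distance in the shape sphere $M^\ast\simeq S^2(1/2)$) satisfies $$\cos(2r)=4\sqrt{m_1m_2m_3}\,\frac{\Delta}{I},$$ where $\Delta$ and $I$ are the area and moment of inertia of $\delta$.
   Context: Masses $m_1,m_2,m_3>0$, $m_1+m_2+m_3=1$; m-triangle $(\mathbf a_1,\mathbf a_2,\mathbf a_3)$, $\sum m_i\mathbf a_i=0$, $I=\sum m_i|\mathbf a_i|^2$. The shape sphere $M^\ast$ is the space of oriented m-triangles with $I=1$ modulo rotation, with the kinematic metric (induced by $\sum m_i|d\mathbf a_i|^2$ through zero angular momentum lifts), isometric to a round sphere of radius $1/2$; its north pole is the shape of the positively oriented m-triangle with $m_j|\mathbf a_j|^2=(1-m_j)/2$, and the equator (at distance $\pi/4$ from it) consists of collinear shapes. *)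

From mathcomp Require Import all_boot all_order all_algebra.
From mathcomp Require Import all_classical all_reals all_analysis.
Set Implicit Arguments. Unset Strict Implicit. Unset Printing Implicit Defensive.
Import Order.TTheory GRing.Theory Num.Theory.
Local Open Scope classical_set_scope.
Local Open Scope ring_scope.

Section ThreeBody.
Variable R : realType.

Definition i0 : 'I_3 := @Ordinal 3 0 isT.
Definition i1 : 'I_3 := @Ordinal 3 1 isT.
Definition i2 : 'I_3 := @Ordinal 3 2 isT.

Definition config := 'I_3 -> R * R.

Definition masses (m : 'I_3 -> R) := (forall i, 0 < m i) /\ \sum_i m i = 1.

Definition mtriangle (m : 'I_3 -> R) (a : config) :=
  \sum_i m i * (a i).1 = 0 /\ \sum_i m i * (a i).2 = 0.

Definition inertia (m : 'I_3 -> R) (a : config) : R :=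
  \sum_i m i * ((a i).1 ^+ 2 + (a i).2 ^+ 2).

Definition kin (m : 'I_3 -> R) (a b : config) : R :=
  \sum_i m i * ((a i).1 * (b i).1 + (a i).2 * (b i).2).

(* signed area (positive iff a_1 a_2 a_3 is counterclockwise) *)
Definition area (a : config) : R :=
  (((a i1).1 - (a i0).1) * ((a i2).2 - (a i0).2)
   - ((a i2).1 - (a i0).1) * ((a i1).2 - (a i0).2)) / 2.

Definition rotp (t : R) (p : R * R) : R * R :=
  (cos t * p.1 - sin t * p.2, sin t * p.1 + cos t * p.2).

Definition rotc (t : R) (a : config) : config := fun i => rotp t (a i).

Definition scalec (c : R) (a : config) : config :=
  fun i => (c * (a i).1, c * (a i).2).

Definition normalize (m : 'I_3 -> R) (a : config) : config :=
  scalec (Num.sqrt (inertia m a))^-1 a.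

(* great-circle (intrinsic) distance on the unit sphere I = 1 of m-triangles
   for the kinematic metric *)
Definition sphere_dist (m : 'I_3 -> R) (x y : config) : R := acos (kin m x y).

(* distance in the shape sphere M* = (sphere I = 1)/SO(2) with the quotient
   (kinematic) metric: the distance between the rotation orbits *)
Definition shape_dist (m : 'I_3 -> R) (x y : config) : R :=
  inf [set sphere_dist m x (rotc t y) | t in [set: R]].

Definition north_pole_rep (m : 'I_3 -> R) (n : config) :=
  mtriangle m n /\
  (forall j, m j * ((n j).1 ^+ 2 + (n j).2 ^+ 2) = (1 - m j) / 2) /\
  0 < area n.

End ThreeBody.

From mathcomp Require Import all_boot all_order all_algebra.
From mathcomp Require Import all_classical all_reals all_analysis.
From mathcomp Require Import ring lra.
Set Implicit Arguments.
Unset Strict Implicit.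
Unset Printing Implicit Defensive.
Import Order.TTheory GRing.Theory Num.Theory.
Local Open Scope classical_set_scope.
Local Open Scope ring_scope.

(* In the Jacobi coordinates u = a_2 - a_1, v = a_3 of an m-triangle the
   kinematic product is diagonal, <x, y> = mu u.u' + nu v.v' with
   mu = m_1 m_2 / (m_1 + m_2) and nu = m_3 / (m_1 + m_2), and the area is
   u x v / (2 (m_1 + m_2)).  The north pole is the shape whose Jacobi vectors
   are orthogonal, positively oriented and of kinematic norm 1/2 each.
   Rotating a by t turns its kinematic product with the north pole n into
   cos t P + sin t Q, where P + iQ is the hermitian product of n and a; so the
   distance r between the rotation orbits satisfies cos r = |P + iQ| / sqrt I,
   and cos 2r = 2 (P^2 + Q^2) / I - 1.  Expanding P^2 + Q^2 in Jacobi
   coordinates gives 2 (P^2 + Q^2) = I + 4 sqrt(m_1 m_2 m_3) Delta, while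
   4 sqrt(m_1 m_2 m_3) Delta <= I (AM-GM) keeps cos r in [0, 1]. *)

Section PlaneVectors.
Variable R : comPzRingType.
Implicit Types (a b : R) (u v w z : R * R).

Definition dot u v := u.1 * v.1 + u.2 * v.2.
Definition cross u v := u.1 * v.2 - u.2 * v.1.
Definition perp u := (- u.2, u.1).

Lemma sqr_cross_add_dot u v : cross u v ^+ 2 + dot u v ^+ 2 = dot u u * dot v v.
Proof. by rewrite /cross /dot; ring. Qed.

Lemma sqr_dot_add_dot_perp a b u v w z :
  (a * dot u w + b * dot v z) ^+ 2 + (a * dot u (perp w) + b * dot v (perp z)) ^+ 2 =
  a ^+ 2 * (dot u u * dot w w) + b ^+ 2 * (dot v v * dot z z)
  + 2 * a * b * (dot u v * dot w z + cross u v * cross w z).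
Proof. by rewrite /cross /dot /=; ring. Qed.

End PlaneVectors.

Lemma cross_le_dot (R : rcfType) (a b : R) (u v : R * R) : 0 <= a -> 0 <= b ->
  2 * Num.sqrt (a * b) * cross u v <= a * dot u u + b * dot v v.
Proof.
move=> a_ge0 b_ge0; set w := (Num.sqrt a * u.1 - Num.sqrt b * v.2,
                              Num.sqrt a * u.2 + Num.sqrt b * v.1).
have -> : a * dot u u + b * dot v v = 2 * Num.sqrt (a * b) * cross u v + dot w w.
  rewrite sqrtrM // /dot /cross /= -{1}(sqr_sqrtr a_ge0) -{1}(sqr_sqrtr b_ge0); ring.
by rewrite lerDl /dot addr_ge0 // -expr2 sqr_ge0.
Qed.

Lemma sum3 (V : nmodType) (F : 'I_3 -> V) : \sum_i F i = F i0 + F i1 + F i2.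
Proof.
rewrite !big_ord_recl big_ord0 addr0 addrA.
by congr (F _ + F _ + F _); apply: val_inj.
Qed.

Definition perpc (R : realType) (x : config R) : config R := fun i => perp (x i).

Lemma inertia_kin (R : realType) (m : 'I_3 -> R) (x : config R) : inertia m x = kin m x x.
Proof. by apply: eq_bigr => i _; rewrite !expr2. Qed.

Section JacobiCoordinates.
Variables (R : realType) (m : 'I_3 -> R).

Definition edge (x : config R) : R * R := ((x i1).1 - (x i0).1, (x i1).2 - (x i0).2).

(* The m-triangle with Jacobi coordinates [edge x = u] and [x i2 = v]. *)
Definition jacobi (u v : R * R) : config R := fun i =>
  let M := m i0 + m i1 in
  match val i with
  | 0 => ((- (m i1 * u.1) - m i2 * v.1) / M, (- (m i1 * u.2) - m i2 * v.2) / M)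
  | 1 => ((m i0 * u.1 - m i2 * v.1) / M, (m i0 * u.2 - m i2 * v.2) / M)
  | _ => v
  end.

Hypothesis M_neq0 : m i0 + m i1 != 0.

Lemma mtriangle_jacobi x : mtriangle m x -> x = jacobi (edge x) (x i2).
Proof.
rewrite /mtriangle !sum3 => -[c1 c2].
apply: funext => -[[|[|[|k]]] hi] //; rewrite /jacobi /=;
  [have -> : Ordinal hi = i0 by exact: val_inj
  |have -> : Ordinal hi = i1 by exact: val_inj
  |by have -> : Ordinal hi = i2 by exact: val_inj];
  by apply: injective_projections => /=; apply: (mulIf M_neq0); rewrite divfK //; lra.
Qed.

Lemma perpc_jacobi u v : perpc (jacobi u v) = jacobi (perp u) (perp v).
Proof.
by apply: funext => -[[|[|[|k]]] hi] //; rewrite /perpc /jacobi /perp /=;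
  congr (_, _); rewrite -mulNr; congr (_ / _); ring.
Qed.

Hypothesis msum : \sum_i m i = 1.

Let m2E : m i2 = 1 - m i0 - m i1.
Proof. by move: msum; rewrite sum3; lra. Qed.

Lemma kin_jacobi u v w z :
  kin m (jacobi u v) (jacobi w z) =
  m i0 * m i1 / (m i0 + m i1) * dot u w + m i2 / (m i0 + m i1) * dot v z.
Proof. by rewrite /kin sum3 /jacobi /dot /= m2E; field. Qed.

Lemma area_jacobi u v : area (jacobi u v) = cross u v / (2 * (m i0 + m i1)).
Proof. by rewrite /area /jacobi /cross /= m2E; field. Qed.

End JacobiCoordinates.

Section NorthPole.
Variables (R : realType) (m : 'I_3 -> R).
Hypothesis mpos : forall i, 0 < m i.
Hypothesis msum : \sum_i m i = 1.

Let M_gt0 : 0 < m i0 + m i1. Proof. by rewrite addr_gt0. Qed.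
Let M_neq0 : m i0 + m i1 != 0. Proof. by rewrite gt_eqF. Qed.
Let m0_neq0 : m i0 != 0. Proof. by rewrite gt_eqF. Qed.
Let m1_neq0 : m i1 != 0. Proof. by rewrite gt_eqF. Qed.
Let m2_neq0 : m i2 != 0. Proof. by rewrite gt_eqF. Qed.
Let m2E : m i2 = 1 - m i0 - m i1.
Proof. by move: msum; rewrite sum3; lra. Qed.

Lemma north_pole_dot u v :
  (forall j, m j * ((jacobi m u v j).1 ^+ 2 + (jacobi m u v j).2 ^+ 2) = (1 - m j) / 2) ->
  [/\ dot u u = (m i0 + m i1) / (2 * (m i0 * m i1)),
      dot v v = (m i0 + m i1) / (2 * m i2) & dot u v = 0].
Proof.
pose D j := m j * ((jacobi m u v j).1 ^+ 2 + (jacobi m u v j).2 ^+ 2) - (1 - m j) / 2.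
move=> h; have D0 j : D j = 0 by rewrite /D h subrr.
(* Each [D j] is affine in [dot u u], [dot v v] and [dot u v]; invert that system. *)
split; apply/eqP; rewrite -subr_eq0; apply/eqP.
- have -> : dot u u - (m i0 + m i1) / (2 * (m i0 * m i1)) =
      (D i0 + D i1 - m i2 * D i2 / (m i0 + m i1)) * (m i0 + m i1) / (m i0 * m i1).
    by rewrite /D /jacobi /dot /= m2E; field; rewrite -?m2E ?m0_neq0 ?m1_neq0 ?M_neq0.
  by rewrite !D0; ring.
- have -> : dot v v - (m i0 + m i1) / (2 * m i2) = D i2 / m i2.
    by rewrite /D /jacobi /dot /= m2E; field; rewrite -?m2E ?m2_neq0.
  by rewrite D0 mul0r.
- have -> : dot u v = (m i0 + m i1) ^+ 2 / (2 * (m i0 * m i1 * m i2)) *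
      (D i0 - m i1 * (D i0 + D i1 - m i2 * D i2 / (m i0 + m i1)) / (m i0 + m i1)
       - m i0 * m i2 * D i2 / (m i0 + m i1) ^+ 2).
    by rewrite /D /jacobi /dot /= m2E; field;
      rewrite -?m2E ?m0_neq0 ?m1_neq0 ?m2_neq0 ?M_neq0.
  by rewrite !D0; ring.
Qed.

Local Notation s := (Num.sqrt (m i0 * m i1 * m i2)).

Let p_gt0 : 0 < m i0 * m i1 * m i2. Proof. by rewrite !mulr_gt0. Qed.
Let s_gt0 : 0 < s. Proof. by rewrite sqrtr_gt0. Qed.

Lemma north_pole_cross u v :
  (forall j, m j * ((jacobi m u v j).1 ^+ 2 + (jacobi m u v j).2 ^+ 2) = (1 - m j) / 2) ->
  0 < area (jacobi m u v) -> 2 * s * cross u v = m i0 + m i1.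
Proof.
move=> /north_pole_dot[hu hv huv]; rewrite area_jacobi // => harea.
have c_gt0 : 0 < cross u v by move: harea; rewrite pmulr_lgt0 // invr_gt0 mulr_gt0.
apply/eqP; rewrite -(eqrXn2 (n := 2)) ?(ltW M_gt0) ?mulr_ge0 ?(ltW c_gt0) //.
have := sqr_cross_add_dot u v; rewrite huv hu hv expr0n addr0 => hc.
by rewrite !exprMn hc sqr_sqrtr ?ltW //; apply/eqP; field; rewrite m0_neq0 m1_neq0 m2_neq0.
Qed.

Lemma kin_north_pole n a : north_pole_rep m n -> mtriangle m a ->
  2 * (kin m n a ^+ 2 + kin m n (perpc a) ^+ 2) = inertia m a + 4 * s * area a.
Proof.
move=> [hn [hnd hna]] ha.
rewrite (mtriangle_jacobi M_neq0 hn) in hnd hna *; rewrite (mtriangle_jacobi M_neq0 ha).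
move: (edge n) (n i2) (edge a) (a i2) hnd hna => u v w z hnd hna.
have hc : cross u v = (m i0 + m i1) * s / (2 * (m i0 * m i1 * m i2)).
  apply: (mulfI (lt0r_neq0 s_gt0)).
  have -> : s * ((m i0 + m i1) * s / (2 * (m i0 * m i1 * m i2))) =
      s ^+ 2 * (m i0 + m i1) / (2 * (m i0 * m i1 * m i2)) by ring.
  rewrite sqr_sqrtr ?ltW // -(north_pole_cross hnd hna).
  by field; rewrite m0_neq0 m1_neq0 m2_neq0.
have [hu hv huv] := north_pole_dot hnd.
rewrite inertia_kin perpc_jacobi !kin_jacobi // area_jacobi // sqr_dot_add_dot_perp.
by rewrite hu hv huv hc; field; rewrite m0_neq0 m1_neq0 m2_neq0 M_neq0.
Qed.

Lemma area_le_inertia a : mtriangle m a -> 4 * s * area a <= inertia m a.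
Proof.
move=> ha; rewrite (mtriangle_jacobi M_neq0 ha); move: (edge a) (a i2) => w z.
have hsqrt : Num.sqrt (m i0 * m i1 / (m i0 + m i1) * (m i2 / (m i0 + m i1)))
    = s / (m i0 + m i1).
  rewrite (_ : _ * _ = m i0 * m i1 * m i2 * (m i0 + m i1)^-1 ^+ 2); last by field.
  by rewrite sqrtrM ?ltW // sqrtr_sqr ger0_norm // invr_ge0 ltW.
rewrite inertia_kin kin_jacobi // area_jacobi //.
have -> : 4 * s * (cross w z / (2 * (m i0 + m i1))) = 2 * (s / (m i0 + m i1)) * cross w z.
  by field.
by rewrite -hsqrt cross_le_dot // ltW // ?divr_gt0 ?mulr_gt0.
Qed.

End NorthPole.

Section Trigonometry.
Variable R : realType.
Implicit Types (t x y P Q : R).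

Lemma ler_acos x y : -1 <= x -> x <= y -> y <= 1 -> acos y <= acos x.
Proof.
move=> x_ge hxy y_le.
have hx : x \in `[-1, 1] by rewrite in_itv /= x_ge (le_trans hxy).
have hy : y \in `[-1, 1] by rewrite in_itv /= y_le (le_trans x_ge).
have acos_itv (z : R) : z \in `[-1, 1] -> acos z \in `[0, pi].
  by rewrite !in_itv /= => z_itv; rewrite acos_ge0 ?acos_lepi.
by rewrite leNgt -(ltr_cos (acos_itv _ hx) (acos_itv _ hy)) !acosK // -leNgt.
Qed.

Lemma cos_2acos x : -1 <= x <= 1 -> cos (2 * acos x) = 2 * x ^+ 2 - 1.
Proof. by move=> x_itv; rewrite mulr_natl cos_mulr2n acosK ?in_itv // mulr_natl. Qed.

Lemma polar_coordinates P Q :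
  exists t, P = Num.sqrt (P ^+ 2 + Q ^+ 2) * cos t /\ Q = Num.sqrt (P ^+ 2 + Q ^+ 2) * sin t.
Proof.
set r := Num.sqrt _.
have [r_gt0|r_le0] := ltP 0 r; last first.
  have : r == 0 by rewrite eq_le r_le0 sqrtr_ge0.
  rewrite sqrtr_eq0 => PQ_le0.
  have P0 : P = 0 by apply/eqP; rewrite -sqrf_eq0 eq_le sqr_ge0 andbT; nra.
  have Q0 : Q = 0 by apply/eqP; rewrite -sqrf_eq0 eq_le sqr_ge0 andbT; nra.
  by exists 0; rewrite /r P0 Q0 expr2 !mul0r addr0 sqrtr0 !mul0r.
have r2 : r ^+ 2 = P ^+ 2 + Q ^+ 2 by rewrite sqr_sqrtr // addr_ge0 ?sqr_ge0.
have c_itv : -1 <= P / r <= 1.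
  rewrite -ler_norml normrM normfV (gtr0_norm r_gt0) ler_pdivrMr // mul1r.
  by rewrite -sqrtr_sqr ler_sqrt ?addr_ge0 ?sqr_ge0 // lerDl sqr_ge0.
have hPQ : (P / r) ^+ 2 + (Q / r) ^+ 2 = 1.
  by rewrite !expr_div_n -mulrDl -r2 divff // sqrf_eq0 gt_eqF.
have s_acos : sin (acos (P / r)) = `|Q| / r.
  rewrite sin_acos // (_ : 1 - _ = (Q / r) ^+ 2); last by rewrite -hPQ; ring.
  by rewrite sqrtr_sqr normrM normfV (gtr0_norm r_gt0).
have hP : P = r * cos (acos (P / r)) by rewrite acosK ?in_itv //; field; rewrite gt_eqF.
have [Q_ge0|Q_lt0] := leP 0 Q.
  exists (acos (P / r)); rewrite s_acos ger0_norm //.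
  by split; [exact: hP | field; rewrite gt_eqF].
exists (- acos (P / r)); rewrite cosN sinN s_acos ltr0_norm //.
by split; [exact: hP | field; rewrite gt_eqF].
Qed.

Lemma norm_cos_sin_le t P Q : `|cos t * P + sin t * Q| <= Num.sqrt (P ^+ 2 + Q ^+ 2).
Proof.
rewrite -sqrtr_sqr ler_sqrt ?addr_ge0 ?sqr_ge0 //.
have -> : P ^+ 2 + Q ^+ 2 = (cos t * P + sin t * Q) ^+ 2 + (sin t * P - cos t * Q) ^+ 2.
  by rewrite -[LHS]mul1r -(cos2Dsin2 t); ring.
by rewrite lerDl sqr_ge0.
Qed.

Lemma inf_acos_cos_sin P Q : P ^+ 2 + Q ^+ 2 <= 1 ->
  inf [set acos (cos t * P + sin t * Q) | t in [set: R]] = acos (Num.sqrt (P ^+ 2 + Q ^+ 2)).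
Proof.
move=> PQ_le1; set r := Num.sqrt _.
have r_le1 : r <= 1 by rewrite -sqrtr1 ler_sqrt.
have bnd t : -1 <= cos t * P + sin t * Q <= r.
  have /andP[lo hi] : - r <= cos t * P + sin t * Q <= r by rewrite -ler_norml norm_cos_sin_le.
  by rewrite hi (le_trans _ lo) // lerN2.
have [t0 [hP hQ]] := polar_coordinates P Q; rewrite -/r in hP hQ.
have r_mem : [set acos (cos t * P + sin t * Q) | t in [set: R]] (acos r).
  exists t0 => //; congr acos.
  by rewrite {1}hP {1}hQ -[RHS]mulr1 -(cos2Dsin2 t0); ring.
apply/le_anti/andP; split.
  apply: ge_inf r_mem; exists 0 => _ [t _ <-].
  by have /andP[lo hi] := bnd t; rewrite acos_ge0 // lo (le_trans hi).
apply: lb_le_inf; first by exists (acos r).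
by move=> _ [t _ <-]; have /andP[lo hi] := bnd t; exact: ler_acos.
Qed.

End Trigonometry.

Lemma kin_rotc_scalec (R : realType) (m : 'I_3 -> R) (x y : config R) t c :
  kin m x (rotc t (scalec c y)) = c * (cos t * kin m x y + sin t * kin m x (perpc y)).
Proof. by rewrite /kin !sum3 /=; ring. Qed.

Lemma shape_dist_normalize (R : realType) (m : 'I_3 -> R) (n a : config R) :
  let PQ := kin m n a ^+ 2 + kin m n (perpc a) ^+ 2 in
  0 < inertia m a -> PQ <= inertia m a ->
  shape_dist m n (normalize m a) = acos (Num.sqrt (PQ / inertia m a)).
Proof.
move=> PQ I_gt0 PQ_le; set k := (Num.sqrt (inertia m a))^-1.
have k2 : k ^+ 2 = (inertia m a)^-1 by rewrite exprVn sqr_sqrtr ?ltW.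
have kPQ : (k * kin m n a) ^+ 2 + (k * kin m n (perpc a)) ^+ 2 = PQ / inertia m a.
  by rewrite !exprMn -mulrDr k2 mulrC.
rewrite /shape_dist /sphere_dist /normalize -/k -kPQ -inf_acos_cos_sin; last first.
  by rewrite kPQ ler_pdivrMr // mul1r.
by apply: congr1; apply: eq_imagel => t _; rewrite kin_rotc_scalec; congr acos; ring.
Qed.

Theorem mainTheorem15 (R : realType) (m : 'I_3 -> R) (a n : config R) :
  masses m ->
  mtriangle m a -> (exists i, a i != (0, 0)) -> 0 < area a ->
  north_pole_rep m n ->
  cos (2 * shape_dist m n (normalize m a)) =
    4 * Num.sqrt (m i0 * m i1 * m i2) * area a / inertia m a.
Proof.
(* [a] is nonzero because its area is positive. *)
move=> [mpos msum] ha _ harea hn.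
have hPQ := kin_north_pole mpos msum hn ha.
have hle := area_le_inertia mpos msum ha.
set PQ := _ + _ in hPQ; set I := inertia m a in hPQ hle *.
set D := 4 * _ * area a in hPQ hle *.
have s_gt0 : 0 < Num.sqrt (m i0 * m i1 * m i2) by rewrite sqrtr_gt0 !mulr_gt0.
have D_gt0 : 0 < D by rewrite /D mulr_gt0 // mulr_gt0.
have I_gt0 : 0 < I := lt_le_trans D_gt0 hle.
have PQ_ge0 : 0 <= PQ by lra.
have PQ_le : PQ <= I by lra.
have PQI_le1 : PQ / I <= 1 by rewrite ler_pdivrMr // mul1r.
rewrite shape_dist_normalize // -/PQ -/I cos_2acos; last first.
  by rewrite (le_trans (lerN10 _) (sqrtr_ge0 _)) /= -sqrtr1 ler_sqrt.
rewrite sqr_sqrtr ?divr_ge0 ?(ltW I_gt0) // mulrA hPQ.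
by field; rewrite gt_eqF.
Qed.
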